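(* Let $d>2$ be even and let $H$ be a $d\times d$ complex Hadamard matrix. Let $H'$ be the dephased form of $H$. Suppose $H'$ has $m$ pairwise disjoint ER pairs of columns, where $1\le m<d/2$. Then $H$ belongs to an $m$-dimensional affine family: there exist $m$ linearly independent real $d\times d$ matrices $R_1,\dots,R_m$, each with zero first row and zero first column, such that $H'\circ\exp\!\big(i\sum_{k=1}^m \xi_k R_k\big)$ is a complex Hadamard matrix for every $(\xi_1,\dots,\xi_m)\in\mathbb{R}^m$.
   Context: A $d\times d$ complex Hadamard matrix is a matrix $H$ all of whose entries have modulus $1$ and whose columns are pairwise orthogonal (equivalently $HH^*=dI$). It is dephased if every entry of its first row and first column equals $1$; every complex Hadamard matrix $H$ can be written uniquely as $D_1H'D_2$ with $D_1,D_2$ diagonal unitary and $H'$ dephased, and $H'$ is called the dephased form of $H$. Two distinct columns $C_A,C_B$ of a complex Hadamard matrix form an ER (equivalent to real) pair if $\overline{(C_A)_j}(C_B)_j\in\{1,-1\}$ for every row index $j=0,\dots,d-1$. For matrices $A,B$ of equal size, $A\circ B$ is the entrywise (Hadamard) product and $\exp(iR)$ denotes the entrywise exponential $(\exp(iR))_{jk}=e^{iR_{jk}}$. *)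

From HB Require Import structures.
From mathcomp Require Import all_boot all_order all_algebra.
From mathcomp Require Import complex.
From mathcomp Require Import reals trigo.
Set Implicit Arguments. Unset Strict Implicit. Unset Printing Implicit Defensive.
Import Order.TTheory GRing.Theory Num.Theory.
Local Open Scope ring_scope.
Local Open Scope complex_scope.

Definition expi (R : realType) (t : R) : R[i] := (cos t) +i* (sin t).

Definition is_complex_hadamard (R : realType) (d : nat) (H : 'M[R[i]]_d) : Prop :=
  (forall i j, `|H i j| = 1) /\ H *m (map_mx Num.conj H)^T = (d%:R : R[i])%:M.

Definition is_dephased (R : realType) (d : nat) (H : 'M[R[i]]_d) : Prop :=
  forall i j : 'I_d, (val i = 0%N \/ val j = 0%N) -> H i j = 1.

Definition diag_unitary (R : realType) (d : nat) (D : 'M[R[i]]_d) : Prop :=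
  exists v : 'rV[R[i]]_d, (forall j, `|v 0 j| = 1) /\ D = diag_mx v.

(* H' is the dephased form of H: H' is dephased and H = D1 H' D2 with D1, D2
   diagonal unitary (this decomposition is unique) *)
Definition dephased_form_of (R : realType) (d : nat) (H H' : 'M[R[i]]_d) : Prop :=
  is_dephased H' /\
  exists D1 D2, diag_unitary D1 /\ diag_unitary D2 /\ H = D1 *m H' *m D2.

Definition ER_pair (R : realType) (d : nat) (H : 'M[R[i]]_d) (a b : 'I_d) : Prop :=
  a <> b /\ forall j : 'I_d, (H j a)^* * H j b = 1 \/ (H j a)^* * H j b = -1.

Definition has_disjoint_ER_pairs (R : realType) (d m : nat) (H : 'M[R[i]]_d) : Prop :=
  exists p : 'I_m -> 'I_d * 'I_d,
    (forall k, ER_pair H (p k).1 (p k).2) /\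
    (forall k l, k <> l ->
       [/\ (p k).1 <> (p l).1, (p k).1 <> (p l).2,
           (p k).2 <> (p l).1 & (p k).2 <> (p l).2]).

(* The columns a, b of an ER pair satisfy H_b = c .* H_a for a vector c of signs.  Replacing
   them by ((1+e)/2) H_a + ((1-e)/2) H_b and ((1-e)/2) H_a + ((1+e)/2) H_b, with |e| = 1,
   multiplies both columns by e in the rows where c = -1 and leaves the other rows alone.  This
   column operation is right multiplication by a unitary matrix, so it preserves H H^* = d I.
   Performing it on the m disjoint pairs with e_k = exp(i xi_k), and re-dephasing the rows with a
   diagonal unitary, gives the family with R_k(i, j) = [c_k(i) = -1] ([j in pair k] - [0 in pair k]).
   The R_k are independent: the two columns of pair k are orthogonal, so c_k(r) = -1 for some
   row r, and since 2m < d some column j lies in no pair; then R_l(r, a_k) - R_l(r, j) = [l = k]. *)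

From HB Require Import structures.
From mathcomp Require Import all_boot all_order all_algebra.
From mathcomp Require Import complex.
From mathcomp Require Import reals trigo.
From mathcomp Require Import ring.
Import Order.TTheory GRing.Theory Num.Theory.
Set Implicit Arguments. Unset Strict Implicit.
Local Open Scope ring_scope.
Local Open Scope sesquilinear_scope.

Lemma expiD (R : realType) (a b : R) : expi (a + b) = expi a * expi b.
Proof. by rewrite /expi cosD sinD /=; congr Complex; ring. Qed.

Lemma expi0 (R : realType) : expi (0 : R) = 1.
Proof. by rewrite /expi cos0 sin0. Qed.

Lemma conj_expi (R : realType) (t : R) : (expi t)^* = expi (- t).
Proof. by rewrite /expi cosN sinN. Qed.

Lemma expiK (R : realType) (t : R) : (expi t)^* * expi t = 1.
Proof. by rewrite conj_expi -expiD addNr expi0. Qed.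

Lemma normr_expi (R : realType) (t : R) : `|expi t| = 1.
Proof. by apply/eqP; rewrite -sqrp_eq1 ?normr_ge0 // normCKC expiK. Qed.

Lemma conjC_mul_unit (C : numClosedFieldType) (z : C) : `|z| = 1 -> z^* * z = 1.
Proof. by move=> z1; rewrite -normCKC z1 expr1n. Qed.

Lemma conjC_eqN1 (C : numClosedFieldType) (z : C) : (z^* == -1) = (z == -1).
Proof. by apply/eqP/eqP => [z1|->]; [rewrite -[z]conjCK z1|]; rewrite rmorphN1. Qed.

Lemma conjC_mulC (C : numClosedFieldType) (x y : C) : (x^* * y)^* = y^* * x.
Proof. by rewrite rmorphM /= conjCK mulrC. Qed.

Lemma oneC_neqN1 (C : numDomainType) : (1 == -1 :> C) = false.
Proof. by rewrite eq_sym lt_eqF // (lt_trans (ltrN10 _) ltr01). Qed.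

Lemma sum_mul_eqb (V : pzSemiRingType) n (f : 'I_n -> V) j :
  \sum_l f l * (l == j)%:R = f j.
Proof. by rewrite (bigD1 j) //= big1 ?eqxx ?mulr1 ?addr0 // => l /negbTE ->; rewrite mulr0. Qed.

Section ColumnMixing.

Variables (C : numClosedFieldType) (d : nat).

Definition halfD (e : C) := (1 + e) / 2%:R.
Definition halfB (e : C) := (1 - e) / 2%:R.

Lemma halfD_add_halfB e : halfD e + halfB e = 1.
Proof. by rewrite /halfD /halfB; field; rewrite ?pnatr_eq0. Qed.

Lemma halfD_sub_halfB e : halfD e - halfB e = e.
Proof. by rewrite /halfD /halfB; field; rewrite ?pnatr_eq0. Qed.

Lemma conj_halfD e : (halfD e)^* = halfD e^*.
Proof. by rewrite /halfD rmorphM rmorphD rmorph1 fmorphV rmorph_nat. Qed.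

Lemma conj_halfB e : (halfB e)^* = halfB e^*.
Proof. by rewrite /halfB rmorphM rmorphB rmorph1 fmorphV rmorph_nat. Qed.

Lemma halfDB_norm e : e^* * e = 1 ->
  (halfD e)^* * halfD e + (halfB e)^* * halfB e = 1.
Proof.
move=> eK; rewrite conj_halfD conj_halfB /halfD /halfB.
have -> : (1 + e^*) / 2%:R * ((1 + e) / 2%:R) + (1 - e^*) / 2%:R * ((1 - e) / 2%:R)
    = (1 + e^* * e) / 2%:R :> C by field; rewrite ?pnatr_eq0.
by rewrite eK; field; rewrite ?pnatr_eq0.
Qed.

Lemma halfDB_cross e : e^* * e = 1 ->
  (halfD e)^* * halfB e + (halfB e)^* * halfD e = 0.
Proof.
move=> eK; rewrite conj_halfD conj_halfB /halfD /halfB.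
have -> : (1 + e^*) / 2%:R * ((1 - e) / 2%:R) + (1 - e^*) / 2%:R * ((1 + e) / 2%:R)
    = (1 - e^* * e) / 2%:R :> C by field; rewrite ?pnatr_eq0.
by rewrite eK subrr mul0r.
Qed.

Variables (s : 'I_d -> 'I_d) (e : 'I_d -> C).

(* Column j mixes columns j and s j; at a fixed point of s the two terms add up to 1. *)
Definition mix_mx : 'M[C]_d :=
  \matrix_(l, j) ((l == j)%:R * halfD (e j) + (l == s j)%:R * halfB (e j)).

Lemma mulmx_mix_mx (M : 'M[C]_d) i j :
  (M *m mix_mx) i j = M i j * halfD (e j) + M i (s j) * halfB (e j).
Proof.
rewrite !mxE; under eq_bigr do rewrite mxE mulrDr !mulrA.
by rewrite big_split -!big_distrl /= !sum_mul_eqb /halfD /halfB !mulrA.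
Qed.

Lemma mulmx_mix_mx_sign (M : 'M[C]_d) i j :
  `|M i j| = 1 -> (M i j)^* * M i (s j) = 1 \/ (M i j)^* * M i (s j) = -1 ->
  (M *m mix_mx) i j = M i j * (if (M i j)^* * M i (s j) == -1 then e j else 1).
Proof.
move=> Mij1 sgn; rewrite mulmx_mix_mx; set c := _ * M i (s j) in sgn *.
have -> : M i (s j) = M i j * c by rewrite mulrA [M i j * _]mulrC conjC_mul_unit ?mul1r.
case: sgn => ->; rewrite -mulrA -mulrDr ?oneC_neqN1 ?eqxx.
  by rewrite mul1r halfD_add_halfB.
by rewrite mulN1r halfD_sub_halfB.
Qed.

Hypotheses (sK : involutive s) (e_s : forall j, e (s j) = e j)
  (eK : forall j, (e j)^* * e j = 1).

Lemma mix_mx_unitary : mix_mx \is unitarymx.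
Proof.
apply/unitarymxP/mulmx1C/matrixP => x y; rewrite mulmx_mix_mx !mxE.
have ssE u v : (s u == s v) = (u == v) by apply/eqP/eqP => [/(can_inj sK)|->].
have sxE u v : (s u == v) = (u == s v) by rewrite -{1}[v]sK ssE.
have conj_comb (a b : bool) (u v : C) :
    (a%:R * u + b%:R * v)^* = a%:R * u^* + b%:R * v^*.
  by rewrite rmorphD !rmorphM !rmorph_nat.
rewrite ssE sxE !conj_comb.
have [<-|nxy] := eqVneq x y.
  case: (x == s x); rewrite ?mul1r ?mul0r ?addr0 ?add0r; last exact: halfDB_norm (eK x).
  by rewrite -mulrDr -rmorphD halfD_add_halfB rmorph1 mul1r.
have [->|_] := eqVneq y (s x); last by rewrite !(mul0r, add0r).
by rewrite e_s !(mul0r, mul1r, add0r, addr0) addrC halfDB_cross.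
Qed.

End ColumnMixing.

Lemma trmxC_mul (C : numClosedFieldType) m n r (A : 'M[C]_(m, n)) (B : 'M[C]_(n, r)) :
  (A *m B)^t* = B^t* *m A^t*.
Proof. by rewrite trmx_mul map_mxM. Qed.

Lemma unitarymx_diag (C : numClosedFieldType) n (v : 'rV[C]_n) :
  (forall j, `|v 0 j| = 1) -> diag_mx v \is unitarymx.
Proof.
move=> v1; apply/unitarymxP/matrixP => i j; rewrite mul_diag_mx !mxE.
have [<-|_] := eqVneq i j; last by rewrite mulr0n rmorph0 mulr0.
by rewrite mulr1n mulrC conjC_mul_unit.
Qed.

Lemma gram_mulmx_unitary (C : numClosedFieldType) n (U M V : 'M[C]_n) a :
  U \is unitarymx -> V \is unitarymx -> M *m M^t* = a%:M ->
  (U *m M *m V) *m (U *m M *m V)^t* = a%:M.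
Proof.
move=> /unitarymxP UU V_unitary MM.
rewrite !trmxC_mul !mulmxA mulmxtVK // -(mulmxA U) MM mul_mx_scalar -scalemxAl UU.
by rewrite scalemx1.
Qed.

Lemma trmxC_gram (C : numClosedFieldType) n (M : 'M[C]_n) a :
  a != 0 -> M *m M^t* = a%:M -> M^t* *m M = a%:M.
Proof.
move=> a_neq0 MM.
have : M *m (a^-1 *: M^t*) = 1%:M by rewrite -scalemxAr MM scale_scalar_mx mulVf.
move/mulmx1C; rewrite -scalemxAl => /(congr1 ( *:%R a)).
by rewrite scalerA mulfV // scale1r => ->; rewrite scale_scalar_mx mulr1.
Qed.

Lemma hadamard_gram (R : realType) d (H : 'M[R[i]]_d) :
  is_complex_hadamard H -> H *m H^t* = d%:R%:M.
Proof. by case=> _; rewrite map_trmx. Qed.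

Lemma hadamardP (R : realType) d (H : 'M[R[i]]_d) :
  (forall i j, `|H i j| = 1) -> H *m H^t* = d%:R%:M -> is_complex_hadamard H.
Proof. by move=> H1 HH; split; rewrite // map_trmx. Qed.

Lemma hadamard_diag_mulmx (R : realType) d (H : 'M[R[i]]_d) (v w : 'rV[R[i]]_d) :
  (forall j, `|v 0 j| = 1) -> (forall j, `|w 0 j| = 1) ->
  is_complex_hadamard H -> is_complex_hadamard (diag_mx v *m H *m diag_mx w).
Proof.
move=> v1 w1 hadH; apply: hadamardP.
  by move=> i j; rewrite mul_mx_diag mul_diag_mx !mxE !normrM v1 w1 hadH.1 !mul1r.
exact: gram_mulmx_unitary (unitarymx_diag v1) (unitarymx_diag w1) (hadamard_gram hadH).
Qed.

Lemma dephased_form_hadamard (R : realType) d (H H' : 'M[R[i]]_d) :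
  dephased_form_of H H' -> is_complex_hadamard H -> is_complex_hadamard H'.
Proof.
move=> [_ [_ [_ [[v [v1 ->]] [[w [w1 ->]] ->]]]]] hadH.
have conj_unit (u : 'rV[R[i]]_d) : (forall j, `|u 0 j| = 1) ->
    (diag_mx u)^t* = diag_mx (map_mx Num.conj u) /\ forall j, `|(map_mx Num.conj u) 0 j| = 1.
  by move=> u1; rewrite tr_diag_mx map_diag_mx; split=> // j; rewrite mxE norm_conjC.
have [vE v'1] := conj_unit v v1; have [wE w'1] := conj_unit w w1.
have -> : H' = (diag_mx v)^t* *m (diag_mx v *m H' *m diag_mx w) *m (diag_mx w)^t*.
  by rewrite !mulmxA mulmxtVK ?unitarymx_diag // (mulmx1C (unitarymxP (unitarymx_diag v1))) mul1mx.
by rewrite vE wE; apply: hadamard_diag_mulmx.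
Qed.

Lemma ER_pairP (R : realType) d (H : 'M[R[i]]_d) a b :
  ER_pair H a b -> a <> b /\ forall i, (H i a)^* * H i b = 1 \/ (H i a)^* * H i b = -1.
Proof. by []. Qed.

Lemma ER_pair_neq (R : realType) d (H : 'M[R[i]]_d) a b : ER_pair H a b -> a != b.
Proof. by case=> /eqP. Qed.

Lemma ER_pair_sign_exists (R : realType) d (H : 'M[R[i]]_d) a b :
  (0 < d)%N -> is_complex_hadamard H -> ER_pair H a b -> exists r, (H r a)^* * H r b == -1.
Proof.
move=> d_gt0 hadH /ER_pairP [/eqP ab sgn].
have d_neq0 : (d%:R : R[i]) != 0 by rewrite pnatr_eq0 -lt0n.
have /matrixP/(_ a b) := trmxC_gram d_neq0 (hadamard_gram hadH).
rewrite !mxE (negbTE ab) mulr0n => orth_ab.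
case: (pickP (fun r => (H r a)^* * H r b == -1)) => [r ? | none]; first by exists r.
suff : \sum_(r < d) (1 : R[i]) = 0 by rewrite sumr_const card_ord => /eqP; rewrite (negbTE d_neq0).
rewrite -[RHS]orth_ab; apply: eq_bigr => r _; rewrite !mxE.
by case: (sgn r) => // e; move: (none r); rewrite e eqxx.
Qed.

Lemma free_mx_family (F : fieldType) m r c (A : 'I_m -> 'M[F]_(r, c)) :
  (forall k, exists i j j', forall l, A l i j - A l i j' = (l == k)%:R) ->
  free [seq A k | k <- enum 'I_m].
Proof.
move=> dual; have -> : [seq A k | k <- enum 'I_m] = map_tuple A (ord_tuple m) by [].
apply/freeP => a sum0 k; have [i [j [j' Ak]]] := dual k.
have /(congr1 (fun M : 'M_(r, c) => M i j - M i j')) := sum0.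
rewrite !summxE -sumrB !mxE subrr.
under eq_bigr do rewrite !mxE -mulrBr -tnth_nth tnth_map tnth_ord_tuple Ak.
by rewrite sum_mul_eqb.
Qed.

Section PairedColumns.

Variables (d m : nat) (p : 'I_m -> 'I_d * 'I_d).

Definition in_pair k j := (j == (p k).1) || (j == (p k).2).

Lemma exists_col_outside_pairs : (m.*2 < d)%N -> exists j, forall k, ~~ in_pair k j.
Proof.
move=> lt_2m_d; set S := [set (p k).1 | k in 'I_m] :|: [set (p k).2 | k in 'I_m].
have card_S : (#|S| < d)%N.
  apply: leq_ltn_trans (leq_card_setU _ _) _; rewrite -addnn in lt_2m_d.
  by apply: leq_ltn_trans lt_2m_d; rewrite leq_add // (leq_trans (leq_imset_card _ _)) ?card_ord.
have /set0Pn [j] : ~: S != set0 by rewrite -card_gt0 -(ltn_add2l #|S|) addn0 cardsC card_ord.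
rewrite inE => S'j; exists j => k; apply: contra S'j.
by rewrite /in_pair => /orP[]/eqP->; apply/setUP; [left|right]; apply/imsetP; exists k.
Qed.

Hypothesis p_disj : forall k l, k <> l ->
  [/\ (p k).1 <> (p l).1, (p k).1 <> (p l).2, (p k).2 <> (p l).1 & (p k).2 <> (p l).2].

Lemma in_pair_inj k l j : in_pair k j -> in_pair l j -> k = l.
Proof.
move=> kj lj; have [// | /eqP/p_disj[h1 h2 h3 h4]] := eqVneq k l.
exfalso; case/orP: kj => /eqP kj; case/orP: lj => /eqP lj;
  [apply: h1 | apply: h2 | apply: h3 | apply: h4]; by rewrite -kj -lj.
Qed.

Lemma in_pair_fst k l : in_pair l (p k).1 = (l == k).
Proof.
have kk : in_pair k (p k).1 by rewrite /in_pair eqxx.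
by apply/idP/eqP => [/(in_pair_inj kk)|->].
Qed.

Definition pair_of j : option 'I_m := [pick k | in_pair k j].

Lemma pair_ofP k j : in_pair k j -> pair_of j = Some k.
Proof.
move=> kj; rewrite /pair_of; case: pickP => [l lj | /(_ k)]; last by rewrite kj.
by rewrite (in_pair_inj lj kj).
Qed.

Lemma pair_of_None j : pair_of j = None -> forall k, ~~ in_pair k j.
Proof. by rewrite /pair_of; case: pickP => // nj _ k; rewrite nj. Qed.

Lemma in_pair_of k j : pair_of j = Some k -> in_pair k j.
Proof. by rewrite /pair_of; case: pickP => // l lj [<-]. Qed.

Lemma sum_in_pair (V : pzRingType) (f : 'I_m -> V) j :
  \sum_k f k * (in_pair k j)%:R = if pair_of j is Some k then f k else 0.
Proof.
case pj: (pair_of j) => [k|].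
  rewrite (bigD1 k) //= (in_pair_of pj) mulr1 big1 ?addr0 // => l lk.
  by case: (boolP (in_pair l j)) => [/(in_pair_inj (in_pair_of pj)) lk'|];
    [rewrite lk' eqxx in lk | rewrite mulr0].
by rewrite big1 // => k _; rewrite (negbTE (pair_of_None pj k)) mulr0.
Qed.

Definition partner j :=
  if pair_of j is Some k then (if j == (p k).1 then (p k).2 else (p k).1) else j.

Lemma partner_in_pair k j :
  in_pair k j -> partner j = if j == (p k).1 then (p k).2 else (p k).1.
Proof. by move=> kj; rewrite /partner (pair_ofP kj). Qed.

Lemma in_pair_partner k j : in_pair k j -> in_pair k (partner j).
Proof. by move=> kj; rewrite (partner_in_pair kj) /in_pair; case: ifP; rewrite eqxx ?orbT. Qed.

Lemma pair_of_partner j : pair_of (partner j) = pair_of j.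
Proof.
case pj: (pair_of j) => [k|]; last by rewrite /partner pj.
by rewrite (pair_ofP (in_pair_partner (in_pair_of pj))).
Qed.

Hypothesis p_neq : forall k, (p k).1 != (p k).2.

Lemma partnerK : involutive partner.
Proof.
move=> j; case pj: (pair_of j) => [k|]; last by rewrite /partner pj pj.
have kj := in_pair_of pj; rewrite (partner_in_pair (in_pair_partner kj)) (partner_in_pair kj).
have [-> | ne1] := eqVneq j (p k).1; first by rewrite eq_sym (negbTE (p_neq k)).
rewrite eqxx; case/orP: kj => /eqP // ja.
by rewrite ja eqxx in ne1.
Qed.

End PairedColumns.

Section DisjointERPairs.

Variables (R : realType) (d m : nat) (H : 'M[R[i]]_d) (p : 'I_m -> 'I_d * 'I_d).
Hypotheses (H_unimodular : forall i j, `|H i j| = 1)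
  (p_ER : forall k, ER_pair H (p k).1 (p k).2)
  (p_disj : forall k l, k <> l ->
    [/\ (p k).1 <> (p l).1, (p k).1 <> (p l).2, (p k).2 <> (p l).1 & (p k).2 <> (p l).2]).

Definition ER_sign k i : bool := (H i (p k).1)^* * H i (p k).2 == -1.

Lemma partner_ER_sign k i j : in_pair p k j ->
  ((H i j)^* * H i (partner p j) == -1) = ER_sign k i.
Proof.
move=> kj; rewrite (partner_in_pair p_disj kj).
case/orP: kj => /eqP ->; rewrite ?eqxx // [(p k).2 == _]eq_sym (negbTE (ER_pair_neq (p_ER k))).
by rewrite -conjC_mulC conjC_eqN1.
Qed.

Lemma partner_sign i j :
  (H i j)^* * H i (partner p j) = 1 \/ (H i j)^* * H i (partner p j) = -1.
Proof.
case pj: (pair_of p j) => [k|]; last by rewrite /partner pj (conjC_mul_unit (H_unimodular i j)); left.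
have kj := in_pair_of pj; have [_ sgn] := ER_pairP (p_ER k).
rewrite (partner_in_pair p_disj kj); case/orP: kj => /eqP ->; rewrite ?eqxx; first exact: sgn.
rewrite [(p k).2 == _]eq_sym (negbTE (ER_pair_neq (p_ER k))) -conjC_mulC.
by case: (sgn i) => ->; rewrite ?rmorph1 ?rmorphN1; [left|right].
Qed.

Definition pair_phase (xi : 'I_m -> R) j : R[i] := expi (\sum_k xi k * (in_pair p k j)%:R).

Lemma pair_phase_partner xi j : pair_phase xi (partner p j) = pair_phase xi j.
Proof. by rewrite /pair_phase !(sum_in_pair p_disj) pair_of_partner. Qed.

Lemma mulmx_mix_ER_pairs xi i j :
  (H *m mix_mx (partner p) (pair_phase xi)) i j =
  H i j * expi (\sum_k xi k * (ER_sign k i)%:R * (in_pair p k j)%:R).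
Proof.
rewrite mulmx_mix_mx_sign; [congr (_ * _) | exact: H_unimodular | exact: partner_sign].
rewrite /pair_phase !(sum_in_pair p_disj).
case pj: (pair_of p j) => [k|]; last by rewrite /partner pj (conjC_mul_unit (H_unimodular i j)) oneC_neqN1 expi0.
by rewrite (partner_ER_sign i (in_pair_of pj)); case: (ER_sign k i); rewrite ?mulr1 ?mulr0 ?expi0.
Qed.

Variable j0 : 'I_d.

Definition ER_direction k : 'M[R]_d :=
  \matrix_(i, j) ((ER_sign k i)%:R * ((in_pair p k j)%:R - (in_pair p k j0)%:R)).

Lemma ER_direction_col0 k i : ER_direction k i j0 = 0.
Proof. by rewrite mxE subrr mulr0. Qed.

Lemma ER_direction_row0 k i j : (forall j', H i j' = 1) -> ER_direction k i j = 0.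
Proof. by move=> row1; rewrite mxE /ER_sign !row1 rmorph1 mul1r oneC_neqN1 mul0r. Qed.

Lemma free_ER_directions : (0 < d)%N -> (m.*2 < d)%N -> is_complex_hadamard H ->
  free [seq ER_direction k | k <- enum 'I_m].
Proof.
move=> d_gt0 lt_2m_d hadH; apply: free_mx_family => k.
have [r rk] := ER_pair_sign_exists d_gt0 hadH (p_ER k).
have [c c_out] := exists_col_outside_pairs p lt_2m_d.
exists r, (p k).1, c => l.
rewrite !mxE -mulrBr opprB addrA subrK (in_pair_fst p_disj) (negbTE (c_out l)) subr0.
by have [->|_] := eqVneq l k; rewrite ?mulr0 // /ER_sign rk mulr1.
Qed.

Lemma ER_deformation_hadamard (xi : 'I_m -> R) : is_complex_hadamard H ->
  is_complex_hadamard (\matrix_(i, j) (H i j * expi (\sum_k xi k * ER_direction k i j))).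
Proof.
move=> hadH; apply: hadamardP => [i j|].
  by rewrite mxE normrM normr_expi mulr1 H_unimodular.
pose E i j := \sum_k xi k * (ER_sign k i)%:R * (in_pair p k j)%:R.
have -> : \matrix_(i, j) (H i j * expi (\sum_k xi k * ER_direction k i j)) =
    diag_mx (\row_i expi (- E i j0)) *m H *m mix_mx (partner p) (pair_phase xi).
  apply/matrixP => i j; rewrite -mulmxA mul_diag_mx [RHS]mxE mulmx_mix_ER_pairs !mxE.
  under eq_bigr do rewrite mxE !mulrBr !mulrA.
  by rewrite sumrB expiD mulrA mulrC.
apply: gram_mulmx_unitary (hadamard_gram hadH).
  by apply: unitarymx_diag => j; rewrite mxE normr_expi.
apply: mix_mx_unitary => [|j|j]; last exact: expiK.
  exact: partnerK p_disj (fun k => ER_pair_neq (p_ER k)).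
exact: pair_phase_partner.
Qed.

End DisjointERPairs.

Unset Implicit Arguments. Set Strict Implicit.

Theorem theorem1 (R : realType) (d m : nat) (H H' : 'M[R[i]]_d) :
  (2 < d)%N -> ~~ odd d ->
  is_complex_hadamard H ->
  dephased_form_of H H' ->
  (1 <= m)%N -> (m.*2 < d)%N ->
  has_disjoint_ER_pairs m H' ->
  exists Rk : 'I_m -> 'M[R]_d,
    free [seq Rk k | k <- enum 'I_m] /\
    (forall k (i j : 'I_d), (val i = 0%N \/ val j = 0%N) -> Rk k i j = 0) /\
    (forall xi : 'I_m -> R,
       is_complex_hadamard
         (\matrix_(i, j) (H' i j * expi (\sum_(k < m) xi k * Rk k i j)))).
Proof.
move=> d_gt2 _ hadH dephH _ lt_2m_d [p [p_ER p_disj]].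
have hadH' := dephased_form_hadamard dephH hadH.
have d_gt0 : (0 < d)%N by apply: leq_trans d_gt2.
exists (ER_direction H' p (Ordinal d_gt0)); split; [|split].
- exact: free_ER_directions.
- move=> k i j [i0 | j0]; first by apply: ER_direction_row0 => j'; apply: dephH.1; left.
  by rewrite (_ : j = Ordinal d_gt0) ?ER_direction_col0 //; apply: val_inj.
- move=> xi; exact: ER_deformation_hadamard hadH'.1 p_ER p_disj _ xi hadH'.
Qed.
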